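(* Let $\Pi$ be an online subadditive coverage problem and $p\in[0,1]$. If there exists an $\alpha(p)$-competitive monotone algorithm for $\Pi$ in the $p$-sample independent model, then there exists an $\alpha(p)$-competitive algorithm for $\Pi$ in the $(\frac12,p)$-sample MRF model.
   Context: Subadditive coverage problem: $V$ is a set of demand points and $E$ a ground set of elements; for each $D \subseteq V$ there is a family $\mathcal{F}_D \subseteq 2^E$ of feasible solutions such that (a) $S_1\in\mathcal{F}_{D_1}$, $S_2\in\mathcal{F}_{D_2}$ imply $S_1\cup S_2\in\mathcal{F}_{D_1\cup D_2}$, and (b) $D_1\subseteq D_2$ implies $\mathcal{F}_{D_2}\subseteq\mathcal{F}_{D_1}$. The cost $c:2^E\to\mathbb{R}_{\ge0}$ is monotone and subadditive; $\mathrm{OPT}(D)=\min_{S\in\mathcal{F}_D}c(S)$. Online: demands arrive one at a time, and after each arrival the algorithm irrevocably adds elements so that its current set is feasible for all demands so far. $p$-sample independent model: an adversary chooses an unknown value set $V=\{v_1,\dots,v_n\}$; a sample $S\subseteq V$, containing each $v_i$ independently with known probability $p$, is revealed upfront; $R=V\setminus S$ arrive as demands in adversarial order. An algorithm is $\alpha(p)$-competitive if its expected cost is at most $\alpha(p)\cdot\mathrm{OPT}(V)$. It is monotone if it remains $\alpha(p)$-competitive when the sample set is augmented by moving some (possibly adversarially chosen) real values into it, i.e. the sample is any $S\supseteq S'$ with $S'$ containing each $v_i$ independently with probability $p$, and the demand set is $V\setminus S$. $(\frac12,p)$-sample MRF model: an adversary chooses an unknown value set $V=\{v_1,\dots,v_n\}$;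 a random sample $S\subseteq V$ is revealed upfront, where $(\mathbf{1}[v_i\in S])_{i\in[n]}$ has an unknown MRF distribution over $\{0,1\}^n$ (a distribution with $\Pr[x]\propto\exp(\sum_i\psi_i(x_i)+\sum_e\psi_e(x_e))$ for a hypergraph and potentials) such that for each $i$: $\Pr[v_i\in S]\ge1/2$, and $\Pr[v_i\in S\mid\text{membership of all }v_{i'},i'\neq i]\ge p$ for every conditioning. The values $V\setminus S$ arrive in adversarial order as demands. Competitiveness is measured against $\mathrm{OPT}(V)$ as in the $p$-sample model. *)

From HB Require Import structures.
From mathcomp Require Import all_boot all_order all_algebra.
From mathcomp Require Import all_classical all_reals all_analysis.
Set Implicit Arguments. Unset Strict Implicit. Unset Printing Implicit Defensive.
Import Order.TTheory GRing.Theory Num.Theory.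
Local Open Scope ring_scope.

(* Demand points live in a finite type U, elements in a finite type E.
   F D S  means  S \in F_D ;  c is the cost function. *)

Definition coverage_union (U E : finType) (F : {set U} -> {set E} -> Prop) :=
  forall (D1 D2 : {set U}) (S1 S2 : {set E}), F D1 S1 -> F D2 S2 -> F (D1 :|: D2) (S1 :|: S2).

Definition coverage_antimono (U E : finType) (F : {set U} -> {set E} -> Prop) :=
  forall (D1 D2 : {set U}) (S : {set E}), D1 \subset D2 -> F D2 S -> F D1 S.

Definition cost_nonneg (R : realType) (E : finType) (c : {set E} -> R) :=
  forall S, 0 <= c S.

Definition cost_monotone (R : realType) (E : finType) (c : {set E} -> R) :=
  forall A B : {set E}, A \subset B -> c A <= c B.

Definition cost_subadditive (R : realType) (E : finType) (c : {set E} -> R) :=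
  forall A B : {set E}, c (A :|: B) <= c A + c B.

Definition subadditive_coverage (R : realType) (U E : finType)
  (F : {set U} -> {set E} -> Prop) (c : {set E} -> R) :=
  [/\ coverage_union F, coverage_antimono F,
      cost_nonneg c, cost_monotone c & cost_subadditive c].

(* The default value [c [set: E]] is an upper bound
   of every c S (c monotone), so this is exactly the minimum whenever F_D is
   nonempty; OPT is only ever used for such D. *)
Definition OPT (R : realType) (U E : finType)
  (F : {set U} -> {set E} -> Prop) (c : {set E} -> R) (D : {set U}) : R :=
  \big[Num.min/c [set: E]]_(S : {set E} | `[< F D S >]) c S.

(* A deterministic online algorithm maps the revealed sample (a set of values)
   and the sequence of demands arrived so far to its current solution.
   A randomized algorithm is a finite mixture of deterministic ones
   (random seed drawn from a finite type with weights [wt]). *)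
Record ralg (R : realType) (U E : finType) := RAlg {
  seed : finType;
  wt : seed -> R;
  run : seed -> {set U} -> seq U -> {set E}
}.
Arguments seed {R U E} _.
Arguments wt {R U E} _ _.
Arguments run {R U E} _ _ _ _.

Definition ralg_wf (R : realType) (U E : finType) (A : ralg R U E) :=
  (forall r, 0 <= wt A r) /\ \sum_(r : seed A) wt A r = 1.

(* A run on sample [smp] and arrival sequence [arr] is valid: after each
   arrival the current set is feasible for all demands arrived so far, and
   the solution only grows (irrevocability). *)
Definition valid_run (U E : finType) (F : {set U} -> {set E} -> Prop)
  (a : {set U} -> seq U -> {set E}) (smp : {set U}) (arr : seq U) :=
  forall k : nat, (k <= size arr)%N ->
    ((0 < k)%N -> F [set x in take k arr] (a smp (take k arr))) /\
    ((k < size arr)%N -> a smp (take k arr) \subset a smp (take k.+1 arr)).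

(* Expected cost when the sample index set is drawn from mu, the actual sample
   is [aug T] (T the drawn set), and demands arrive in the order [ord T]. *)
Definition exp_cost (R : realType) (U E : finType) (c : {set E} -> R)
  (A : ralg R U E) (n : nat) (v : 'I_n -> U) (mu : {set 'I_n} -> R)
  (aug : {set 'I_n} -> {set 'I_n}) (ord : {set 'I_n} -> seq 'I_n) : R :=
  \sum_(T : {set 'I_n}) mu T *
     \sum_(r : seed A) wt A r * c (run A r (v @: aug T) (map v (ord T))).

Definition competitive_on (R : realType) (U E : finType)
  (F : {set U} -> {set E} -> Prop) (c : {set E} -> R) (alpha : R)
  (A : ralg R U E) (n : nat) (v : 'I_n -> U) (mu : {set 'I_n} -> R)
  (aug : {set 'I_n} -> {set 'I_n}) (ord : {set 'I_n} -> seq 'I_n) :=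
  (forall (T : {set 'I_n}) (r : seed A), valid_run F (run A r) (v @: aug T) (map v (ord T))) /\
  exp_cost c A v mu aug ord <= alpha * OPT F c (v @: [set: 'I_n]).

Definition indep_sample (R : realType) (n : nat) (p : R) (T : {set 'I_n}) : R :=
  p ^+ #|T| * (1 - p) ^+ (n - #|T|).

(* Monotone alpha-competitive in the p-sample independent model: the
   adversary may augment the p-sample T to any aug T containing T; the
   remaining values arrive in an adversarial order (depending on T). *)
Definition monotone_indep_competitive (R : realType) (U E : finType)
  (F : {set U} -> {set E} -> Prop) (c : {set E} -> R) (p alpha : R)
  (A : ralg R U E) :=
  ralg_wf A /\
  forall (n : nat) (v : 'I_n -> U), injective v ->
  (exists S, F (v @: [set: 'I_n]) S) ->
  forall (aug : {set 'I_n} -> {set 'I_n}), (forall T : {set 'I_n}, T \subset aug T) ->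
  forall (ord : {set 'I_n} -> seq 'I_n),
    (forall T : {set 'I_n}, perm_eq (ord T) (enum (~: aug T))) ->
    competitive_on F c alpha A v (indep_sample p) aug ord.

(* Hypergraph H on [n], vertex potentials psi1, hyperedge potentials psiE
   (psiE e applied to the restriction x_e, represented as T :&: e). *)
Definition mrf_weight (R : realType) (n : nat) (H : {set {set 'I_n}})
  (psi1 : 'I_n -> bool -> R) (psiE : {set 'I_n} -> {set 'I_n} -> R)
  (T : {set 'I_n}) : R :=
  expR (\sum_(i : 'I_n) psi1 i (i \in T) + \sum_(e in H) psiE e (T :&: e)).

Definition is_MRF (R : realType) (n : nat) (mu : {set 'I_n} -> R) :=
  exists (H : {set {set 'I_n}}) (psi1 : 'I_n -> bool -> R)
         (psiE : {set 'I_n} -> {set 'I_n} -> R),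
  forall T : {set 'I_n}, mu T = mrf_weight H psi1 psiE T /
                   \sum_(T' : {set 'I_n}) mrf_weight H psi1 psiE T'.

(* Pr[v_i in S] >= q, and Pr[v_i in S | S \ {v_i} = B] >= p for every B. *)
Definition half_p_MRF (R : realType) (n : nat) (q p : R) (mu : {set 'I_n} -> R) :=
  is_MRF mu /\
  forall i : 'I_n,
    q <= \sum_(T : {set 'I_n} | i \in T) mu T /\
    forall B : {set 'I_n}, i \notin B ->
      p <= mu (i |: B) / (mu (i |: B) + mu B).

Definition mrf_competitive (R : realType) (U E : finType)
  (F : {set U} -> {set E} -> Prop) (c : {set E} -> R) (p alpha : R)
  (A : ralg R U E) :=
  ralg_wf A /\
  forall (n : nat) (v : 'I_n -> U), injective v ->
  (exists S, F (v @: [set: 'I_n]) S) ->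
  forall mu : {set 'I_n} -> R, half_p_MRF (1 / 2) p mu ->
  forall (ord : {set 'I_n} -> seq 'I_n),
    (forall T : {set 'I_n}, perm_eq (ord T) (enum (~: T))) ->
    competitive_on F c alpha A v mu id ord.

(** The same algorithm works.  Let [f S] be its expected cost when the sample
    is [S], and let the adversary augment a sample [T] to the superset [g T]
    maximising [f]; then [T |-> f (g T)] is antitone and dominates [f].  The
    conditional lower bound [p] in the MRF model says that adding a single
    point to any configuration multiplies its probability by at least
    [p / (1 - p)]; by induction on the number of points, such a distribution
    gives every antitone function a smaller expectation than the independent
    [p]-sample does.  So the MRF cost is at most the cost of the monotone
    algorithm against the augmentation [g], hence at most [alpha * OPT]. *)
From HB Require Import structures.
From mathcomp Require Import all_boot all_order all_algebra.
From mathcomp Require Import all_classical all_reals all_analysis.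
From mathcomp Require Import ring lra.
Set Implicit Arguments. Unset Strict Implicit. Unset Printing Implicit Defensive.
Import Order.TTheory GRing.Theory Num.Theory.
Local Open Scope ring_scope.

Lemma sum_subsets_setD1 (V : nmodType) (I : finType) (X : {set I}) (i : I)
    (G : {set I} -> V) :
  i \in X ->
  \sum_(T : {set I} | T \subset X) G T =
  \sum_(B : {set I} | B \subset X :\ i) G (i |: B) +
  \sum_(B : {set I} | B \subset X :\ i) G B.
Proof.
move=> iX; rewrite (bigID (fun T : {set I} => i \in T)) /=; congr (_ + _).
  rewrite (reindex_onto (fun B => i |: B) (fun T => T :\ i)) /=; last first.
    by move=> T /andP[_ iT]; exact: finset.setD1K.
  apply: eq_bigl => B; rewrite subsetD1 setU11 andbT.
  apply/andP/andP => [[XiB /eqP <-]|[BX iB]].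
    by rewrite setD11 (fintype.subset_trans (subsetDl _ _) XiB).
  by rewrite setU1K // finset.subUset finset.sub1set iX BX.
by apply: eq_bigl => T; rewrite subsetD1.
Qed.

Lemma sum_subsets0 (V : nmodType) (I : finType) (G : {set I} -> V) :
  \sum_(T : {set I} | T \subset finset.set0) G T = G finset.set0.
Proof. by rewrite (eq_bigl _ _ (fun T => finset.subset0 T)) big_pred1_eq. Qed.

Section IndependentDomination.

Variables (R : realFieldType) (I : finType) (p : R).
Hypothesis p01 : 0 <= p <= 1.

Definition indep_weight (X T : {set I}) : R :=
  p ^+ #|T| * (1 - p) ^+ (#|X| - #|T|).

Lemma indep_weight_ge0 (X T : {set I}) : 0 <= indep_weight X T.
Proof. by case/andP: p01 => p0 p1; rewrite mulr_ge0 ?exprn_ge0 ?subr_ge0. Qed.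

Lemma indep_weight_setU1 (X B : {set I}) (i : I) :
  i \in X -> B \subset X :\ i ->
  indep_weight X (i |: B) = p * indep_weight (X :\ i) B.
Proof.
move=> iX; rewrite subsetD1 => /andP[_ iB].
by rewrite /indep_weight cardsU1 iB (cardsD1 i X) iX add1n subSS exprS -mulrA.
Qed.

Lemma indep_weight_notin (X B : {set I}) (i : I) :
  i \in X -> B \subset X :\ i ->
  indep_weight X B = (1 - p) * indep_weight (X :\ i) B.
Proof.
move=> iX BX; have /subset_leq_card cardB := BX.
by rewrite /indep_weight (cardsD1 i X) iX add1n subSn // exprS mulrCA.
Qed.

Lemma sum_indep_weight_setD1 (X : {set I}) (i : I) (h : {set I} -> R) :
  i \in X ->
  \sum_(T : {set I} | T \subset X) indep_weight X T * h T =
  p * \sum_(B : {set I} | B \subset X :\ i) indep_weight (X :\ i) B * h (i |: B) +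
  (1 - p) * \sum_(B : {set I} | B \subset X :\ i) indep_weight (X :\ i) B * h B.
Proof.
move=> iX; rewrite (sum_subsets_setD1 _ iX) !mulr_sumr.
congr (_ + _); apply: eq_bigr => B BXi; rewrite mulrA.
  by rewrite indep_weight_setU1.
by rewrite (indep_weight_notin iX).
Qed.

(* [p * nu B <= (1 - p) * nu (i |: B)] is [Pr[i \in S | S :\ i = B] >= p]
   cleared of denominators, so it also makes sense when [nu] vanishes. *)
Definition odds_ge (X : {set I}) (nu : {set I} -> R) :=
  forall (i : I) (B : {set I}), i \in X -> B \subset X -> i \notin B ->
    p * nu B <= (1 - p) * nu (i |: B).

Lemma odds_geS (X Y : {set I}) (nu : {set I} -> R) :
  Y \subset X -> odds_ge X nu -> odds_ge Y nu.
Proof.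
move=> YX odds j B jY BY jB.
by apply: odds; rewrite ?(fintype.subsetP YX) ?(fintype.subset_trans BY).
Qed.

Lemma odds_ge_setU1 (X : {set I}) (i : I) (nu : {set I} -> R) :
  i \in X -> odds_ge X nu -> odds_ge (X :\ i) (fun B => nu (i |: B)).
Proof.
move=> iX odds j B; rewrite in_setD1 => /andP[ji jX] BXi jB.
rewrite finset.setUCA; apply: odds; rewrite ?in_setU1 ?negb_or ?ji //.
by rewrite finset.subUset finset.sub1set iX (fintype.subset_trans BXi) ?subsetDl.
Qed.

Lemma odds_ge_sum (X : {set I}) (i : I) (nu : {set I} -> R) :
  i \in X -> odds_ge X nu ->
  p * \sum_(B : {set I} | B \subset X :\ i) nu B <=
  (1 - p) * \sum_(B : {set I} | B \subset X :\ i) nu (i |: B).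
Proof.
move=> iX odds; rewrite !mulr_sumr; apply: ler_sum => B.
by rewrite subsetD1 => /andP[BX iB]; apply: odds.
Qed.

(* The inductive step for a new point [i]: [N1] and [N0] are the masses of the
   configurations with and without [i], [a <= b] the corresponding independent
   means of the antitone function. *)
Lemma odds_mixture_le (a b N0 N1 : R) : 0 <= N0 -> 0 <= N1 -> a <= b ->
  p * N0 <= (1 - p) * N1 ->
  N1 * a + N0 * b <= (N1 + N0) * (p * a + (1 - p) * b).
Proof.
move=> N00 N10 ab odds.
rewrite -subr_ge0 (_ : _ - _ = (b - a) * ((1 - p) * N1 - p * N0)); last by ring.
by rewrite mulr_ge0 ?subr_ge0.
Qed.

Lemma antitone_mean_le_indep (X : {set I}) (nu h : {set I} -> R) :
  (forall S, 0 <= nu S) -> odds_ge X nu ->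
  (forall A B : {set I}, A \subset B -> h B <= h A) ->
  \sum_(S : {set I} | S \subset X) nu S * h S <=
  (\sum_(S : {set I} | S \subset X) nu S) *
  \sum_(T : {set I} | T \subset X) indep_weight X T * h T.
Proof.
have [k cardX] : exists k, #|X| = k by exists #|X|.
elim: k X nu h cardX => [|k IH] X nu h cardX nu0 odds h_anti.
  move/eqP: cardX; rewrite cards_eq0 => /eqP ->.
  by rewrite !sum_subsets0 /indep_weight cards0 subnn !expr0 !mul1r.
have [i iX] : exists i, i \in X by apply/card_gt0P; rewrite cardX.
have cardXi : #|X :\ i| = k by move: cardX; rewrite (cardsD1 i X) iX add1n => -[].
rewrite (sum_indep_weight_setD1 _ iX) !(sum_subsets_setD1 _ iX).
have L1 := IH (X :\ i) _ (fun B => h (i |: B)) cardXi (fun B => nu0 (i |: B))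
  (odds_ge_setU1 iX odds) (fun A B AB => h_anti _ _ (finset.setUS [set i] AB)).
have L0 := IH (X :\ i) nu h cardXi nu0 (odds_geS (subsetDl X [set i]) odds) h_anti.
apply: le_trans (lerD L1 L0) (odds_mixture_le _ _ _ _).
- by rewrite sumr_ge0.
- by rewrite sumr_ge0.
- apply: ler_sum => B _; rewrite ler_wpM2l ?indep_weight_ge0 //.
  by apply: h_anti; rewrite finset.subsetUr.
- exact: odds_ge_sum.
Qed.

End IndependentDomination.

Lemma antitone_mean_le_indep_sample (R : realType) (n : nat) (p : R)
    (nu h : {set 'I_n} -> R) :
  0 <= p <= 1 -> (forall S, 0 <= nu S) -> \sum_S nu S = 1 ->
  odds_ge p [set: 'I_n] nu ->
  (forall A B : {set 'I_n}, A \subset B -> h B <= h A) ->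
  \sum_S nu S * h S <= \sum_T indep_sample p T * h T.
Proof.
move=> p01 nu0 nu1 odds h_anti.
have allT (S : {set 'I_n}) : (S \subset [set: 'I_n]) = true by rewrite finset.subsetT.
have := antitone_mean_le_indep p01 nu0 odds h_anti.
rewrite !(eq_bigl _ _ allT) nu1 mul1r; congr (_ <= _); apply: eq_bigr => T _.
by rewrite /indep_weight cardsT card_ord.
Qed.

Section MarkovRandomField.

Variables (R : realType) (n : nat).

Lemma mrf_norm_gt0 (H : {set {set 'I_n}}) (psi1 : 'I_n -> bool -> R)
    (psiE : {set 'I_n} -> {set 'I_n} -> R) :
  0 < \sum_(T : {set 'I_n}) mrf_weight H psi1 psiE T.
Proof.
rewrite (bigD1 finset.set0) //= ltr_wpDr ?expR_gt0 //.
by rewrite sumr_ge0 // => T _; rewrite ltW ?expR_gt0.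
Qed.

Lemma MRF_gt0 (mu : {set 'I_n} -> R) : is_MRF mu -> forall T, 0 < mu T.
Proof.
move=> [H [psi1 [psiE mu_def]]] T.
by rewrite mu_def divr_gt0 ?expR_gt0 ?mrf_norm_gt0.
Qed.

Lemma MRF_sum1 (mu : {set 'I_n} -> R) : is_MRF mu -> \sum_T mu T = 1.
Proof.
move=> [H [psi1 [psiE mu_def]]]; under eq_bigr => T _ do rewrite mu_def.
by rewrite -mulr_suml mulfV // gt_eqF ?mrf_norm_gt0.
Qed.

Lemma half_p_MRF_odds_ge (q p : R) (mu : {set 'I_n} -> R) :
  half_p_MRF q p mu -> odds_ge p [set: 'I_n] mu.
Proof.
move=> [mrf cond] i B _ _ iB; have := (cond i).2 B iB.
have := MRF_gt0 mrf (i |: B); have := MRF_gt0 mrf B.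
move: (mu (i |: B)) (mu B) => x y y0 x0.
by rewrite ler_pdivlMr ?addr_gt0 // => ?; lra.
Qed.

End MarkovRandomField.

Section MaxSuperset.

Variables (R : realType) (I : finType) (f : {set I} -> R).

Definition max_superset (T : {set I}) : {set I} :=
  [arg max_(S > T | T \subset S) f S]%O.

Lemma max_supersetP (T : {set I}) :
  T \subset max_superset T /\
  forall S : {set I}, T \subset S -> f S <= f (max_superset T).
Proof.
by rewrite /max_superset; case: arg_maxP => // S TS Smax; split=> // S' /Smax.
Qed.

Lemma subset_max_superset (T : {set I}) : T \subset max_superset T.
Proof. by case: (max_supersetP T). Qed.

Lemma le_max_superset (T S : {set I}) : T \subset S -> f S <= f (max_superset T).
Proof. by case: (max_supersetP T) => _; apply. Qed.

Lemma max_superset_antitone (A B : {set I}) : A \subset B ->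
  f (max_superset B) <= f (max_superset A).
Proof.
by move=> AB; rewrite le_max_superset ?(fintype.subset_trans AB) ?subset_max_superset.
Qed.

End MaxSuperset.

Theorem lemma3p10 (R : realType) (U E : finType)
  (F : {set U} -> {set E} -> Prop) (c : {set E} -> R) (p alpha : R) :
  subadditive_coverage F c ->
  0 <= p <= 1 ->
  (exists A : ralg R U E, monotone_indep_competitive F c p alpha A) ->
  exists A : ralg R U E, mrf_competitive F c p alpha A.
Proof.
move=> _ p01 [A [wfA indepA]]; exists A; split=> // n v injv feasV mu
  muMRF ord ord_perm.
have [mu_gt0 mu_sum1] := (MRF_gt0 muMRF.1, MRF_sum1 muMRF.1).
pose f (S : {set 'I_n}) :=
  \sum_(r : seed A) wt A r * c (run A r (v @: S) (map v (ord S))).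
split=> [T r|].
  have [valid _] := indepA n v injv feasV (fun T' => T' :|: T)
    (fun T' => finset.subsetUl T' T) (fun T' => ord (T' :|: T)) (fun T' => ord_perm _).
  by have := valid finset.set0 r; rewrite finset.set0U.
have [_ indep_cost] := indepA n v injv feasV (max_superset f)
  (subset_max_superset f) (ord \o max_superset f)
  (fun T => ord_perm (max_superset f T)).
apply: le_trans indep_cost.
apply: (@le_trans _ _ (\sum_T mu T * f (max_superset f T))).
  apply: ler_sum => T _; apply: ler_wpM2l; first exact: ltW.
  exact: (le_max_superset f (fintype.subxx T)).
apply: (antitone_mean_le_indep_sample (h := f \o max_superset f)) => //.
- by move=> S; apply: ltW.
- exact: half_p_MRF_odds_ge muMRF.
- exact: max_superset_antitone.
Qed.
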